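(* The set $\mathbb{R}_\mathcal{I}$ of interval numbers, equipped with the addition $\bar a+\bar b=\langle a_c+b_c;\,a_wb_w\rangle$ and the scalar multiplication $k\bar a=\langle ka_c;\,a_w^{k}\rangle$ ($k\in\mathbb{R}$), is a (real) linear space.
   Context: An interval number is a closed interval $\bar a=[a_l,a_r]$ with $a_l,a_r\in\mathbb{R}$ and $a_l<a_r$ (real numbers are not regarded as degenerate intervals). $\mathbb{R}_\mathcal{I}$ denotes the set of all interval numbers. For $\bar a=[a_l,a_r]$ put $a_c=(a_l+a_r)/2$ (center) and $a_w=(a_r-a_l)/2>0$ (radius), and write $\bar a=\langle a_c;a_w\rangle$, i.e. $\langle a_c;a_w\rangle=[a_c-a_w,a_c+a_w]$. *)

From HB Require Import structures.
From mathcomp Require Import all_boot all_order all_algebra.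
From mathcomp Require Import all_classical all_reals all_analysis.
From mathcomp Require Import lra.
Set Implicit Arguments. Unset Strict Implicit. Unset Printing Implicit Defensive.
Import Order.TTheory GRing.Theory Num.Theory.
Local Open Scope ring_scope.

Record inum (R : realType) := Interval {
  il : R; ir : R; il_lt_ir : il < ir }.

Section IntervalNumbers.
Variable R : realType.

Definition center (a : inum R) : R := (il a + ir a) / 2.
Definition radius (a : inum R) : R := (ir a - il a) / 2.

Lemma radius_gt0 (a : inum R) : 0 < radius a.
Proof. by rewrite /radius divr_gt0 // subr_gt0 il_lt_ir. Qed.

Lemma cw_lt (c w : R) : 0 < w -> c - w < c + w.
Proof. move=> hw; lra. Qed.

(* <c; w> = [c - w, c + w] *)
Definition cw (c w : R) (hw : 0 < w) : inum R := Interval (cw_lt c hw).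

Definition iadd (a b : inum R) : inum R :=
  cw (center a + center b) (mulr_gt0 (radius_gt0 a) (radius_gt0 b)).

Definition iscale (k : R) (a : inum R) : inum R :=
  cw (k * center a) (powR_gt0 k (radius_gt0 a)).

End IntervalNumbers.

(* An interval number is determined by its center and its radius.  On centers
   the operations are the vector operations of R; on radii they are those of
   the multiplicative group (0, +oo) with real exponents, a copy of R through
   ln.  Every linear-space axiom therefore splits into an identity of R and an
   identity of powR. *)
From Pilot Require Import Defs.
From HB Require Import structures.
From mathcomp Require Import all_boot all_order all_algebra.
From mathcomp Require Import all_classical all_reals all_analysis.
From mathcomp Require Import ring.
Import Order.TTheory GRing.Theory Num.Theory.
Local Open Scope ring_scope.

Section IntervalLinearSpace.
Variable R : realType.
Implicit Types (a b c : inum R) (k l : R).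

Lemma inum_eq a b : il a = il b -> ir a = ir b -> a = b.
Proof.
case: a b => la ra ha [lb rb hb] /= El Er.
by subst; rewrite (eq_irrelevance ha hb).
Qed.

Lemma center_cw (m w : R) (hw : 0 < w) : Defs.center (cw m hw) = m.
Proof. by rewrite /Defs.center /=; field. Qed.

Lemma radius_cw (m w : R) (hw : 0 < w) : Defs.radius (cw m hw) = w.
Proof. by rewrite /Defs.radius /=; field. Qed.

Lemma inum_center_radius_eq a b :
  Defs.center a = Defs.center b -> Defs.radius a = Defs.radius b -> a = b.
Proof.
rewrite /Defs.center /Defs.radius => Ec Er.
apply: inum_eq.
- have -> : il a = (il a + ir a) / 2 - (ir a - il a) / 2 by field.
  by rewrite Ec Er; field.
- have -> : ir a = (il a + ir a) / 2 + (ir a - il a) / 2 by field.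
  by rewrite Ec Er; field.
Qed.

Lemma center_iadd a b :
  Defs.center (iadd a b) = Defs.center a + Defs.center b.
Proof. exact: center_cw. Qed.

Lemma radius_iadd a b :
  Defs.radius (iadd a b) = Defs.radius a * Defs.radius b.
Proof. exact: radius_cw. Qed.

Lemma center_iscale k a : Defs.center (iscale k a) = k * Defs.center a.
Proof. exact: center_cw. Qed.

Lemma radius_iscale k a : Defs.radius (iscale k a) = Defs.radius a `^ k.
Proof. exact: radius_cw. Qed.

Definition izero : inum R := cw 0 (@ltr01 R).

Lemma radiusV_gt0 a : 0 < (Defs.radius a)^-1.
Proof. by rewrite invr_gt0 radius_gt0. Qed.

Definition iopp a : inum R := cw (- Defs.center a) (radiusV_gt0 a).

Lemma iaddA a b c : iadd a (iadd b c) = iadd (iadd a b) c.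
Proof.
apply: inum_center_radius_eq.
  by rewrite !center_iadd addrA.
by rewrite !radius_iadd mulrA.
Qed.

Lemma iaddC a b : iadd a b = iadd b a.
Proof.
apply: inum_center_radius_eq.
  by rewrite !center_iadd addrC.
by rewrite !radius_iadd mulrC.
Qed.

Lemma iaddi0 a : iadd a izero = a.
Proof.
apply: inum_center_radius_eq.
  by rewrite center_iadd center_cw addr0.
by rewrite radius_iadd radius_cw mulr1.
Qed.

Lemma iaddiN a : iadd a (iopp a) = izero.
Proof.
apply: inum_center_radius_eq.
  by rewrite center_iadd !center_cw subrr.
by rewrite radius_iadd !radius_cw mulfV // gt_eqF // radius_gt0.
Qed.

Lemma iscaleA k l a : iscale k (iscale l a) = iscale (k * l) a.
Proof.
apply: inum_center_radius_eq.
  by rewrite !center_iscale mulrA.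
by rewrite !radius_iscale (mulrC k) powRrM.
Qed.

Lemma iscale1 a : iscale 1 a = a.
Proof.
apply: inum_center_radius_eq.
  by rewrite center_iscale mul1r.
by rewrite radius_iscale powRr1 // ltW // radius_gt0.
Qed.

Lemma iscaleDr k a b : iscale k (iadd a b) = iadd (iscale k a) (iscale k b).
Proof.
apply: inum_center_radius_eq.
  by rewrite center_iscale !center_iadd !center_iscale mulrDr.
by rewrite radius_iscale !radius_iadd !radius_iscale powRM // ltW // radius_gt0.
Qed.

Lemma iscaleDl k l a : iscale (k + l) a = iadd (iscale k a) (iscale l a).
Proof.
apply: inum_center_radius_eq.
  by rewrite center_iadd !center_iscale mulrDl.
by rewrite radius_iadd !radius_iscale powRD // (gt_eqF (radius_gt0 a)) implybT.
Qed.

End IntervalLinearSpace.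

Theorem theorem2p41 (R : realType) :
  (forall a b c : inum R, iadd a (iadd b c) = iadd (iadd a b) c) /\
  (forall a b : inum R, iadd a b = iadd b a) /\
  (exists z : inum R,
     (forall a : inum R, iadd a z = a) /\
     (forall a : inum R, exists b : inum R, iadd a b = z)) /\
  (forall (k l : R) (a : inum R), iscale k (iscale l a) = iscale (k * l) a) /\
  (forall a : inum R, iscale 1 a = a) /\
  (forall (k : R) (a b : inum R),
     iscale k (iadd a b) = iadd (iscale k a) (iscale k b)) /\
  (forall (k l : R) (a : inum R),
     iscale (k + l) a = iadd (iscale k a) (iscale l a)).
Proof.
split; first exact: iaddA.
split; first exact: iaddC.
split.
  exists (izero R); split; first exact: iaddi0.
  by move=> a; exists (iopp R a); exact: iaddiN.
split; first exact: iscaleA.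
split; first exact: iscale1.
split; first exact: iscaleDr.
exact: iscaleDl.
Qed.
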